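(* Let $G$ be a very well-covered graph with $V(G)=\{x_1,\ldots,x_h,y_1,\ldots,y_h\}$ such that $\{x_1,\ldots,x_h\}$ is a minimal vertex cover, $\{y_1,\ldots,y_h\}$ a maximal independent set and $\{x_i,y_i\}\in E(G)$ for all $i$. Let $s\ge1$, $e_1,\ldots,e_s\in E(G)$, and let $G'$ be the graph associated to $(I(G)^{s+1}:e_1\cdots e_s)$ as in the context. Suppose $(u=p_0)p_1\cdots p_{2k}(p_{2k+1}=v)$, $k\ge1$, is an even-connection in $G$ with respect to $e_1\cdots e_s$. If $\{w,p_i\}\in E(G')$ for some $0\le i\le 2k+1$, then $\{u,w\}\in E(G')$ or $\{v,w\}\in E(G')$.
   Context: $I(G)$ is the edge ideal; edges are identified with the products of their endpoints. $G$ is very well-covered if it has no isolated vertices, all minimal vertex covers have the same size, and this size is $|V(G)|/2$. Even-connection: a sequence $p_0p_1\cdots p_{2k+1}$, $k\ge1$, of vertices with $\{p_r,p_{r+1}\}\in E(G)$ for all $r$, each $\{p_{2\ell+1},p_{2\ell+2}\}$ ($0\le\ell\le k-1$) equal to some $e_m$, and each edge used among these at most as many times as it appears in $e_1,\dots,e_s$; then $p_0,p_{2k+1}$ (possibly equal) are even-connected. $(I(G)^{s+1}:e_1\cdots e_s)$ is minimally generated by $uv$ with $\{u,v\}\in E(G)$ or $u,v$ even-connected; $G'$ is the graph whose edge ideal is the polarization of this ideal (each generator $u^2$ replaced by $uu^*$ with a new vertex $u^*$), so for $u\ne v\in V(G)$, $\{u,v\}\in E(G')$ iff $\{u,v\}\in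 E(G)$ or $u,v$ are even-connected. *)

From mathcomp Require Import all_boot.
Set Implicit Arguments. Unset Strict Implicit. Unset Printing Implicit Defensive.

Section Graphs.
Variable T : finType.
Variable G : rel T.

Definition simple_graph := symmetric G /\ irreflexive G.

Definition vertex_cover (C : {set T}) :=
  forall a b, G a b -> (a \in C) || (b \in C).

Definition minimal_vertex_cover (C : {set T}) :=
  vertex_cover C /\ forall D : {set T}, D \proper C -> ~ vertex_cover D.

Definition independent (S : {set T}) :=
  forall a b, a \in S -> b \in S -> ~~ G a b.

Definition maximal_independent (S : {set T}) :=
  independent S /\ forall S' : {set T}, S \proper S' -> ~ independent S'.

Definition very_well_covered :=
  (forall a, exists b, G a b) /\
  forall C : {set T}, minimal_vertex_cover C -> (#|C| * 2 = #|T|)%N.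

Definition ueq (f g : T * T) : bool :=
  ((f.1 == g.1) && (f.2 == g.2)) || ((f.1 == g.2) && (f.2 == g.1)).

Definition used_edges (x0 : T) (p : seq T) (k : nat) : seq (T * T) :=
  [seq (nth x0 p (2 * l).+1, nth x0 p (2 * l).+2) | l <- iota 0 k].

(* p = [:: p_0; p_1; ...; p_(2k+1)] (k >= 1) is an even-connection with
   respect to e_1 ... e_s, where es = [:: e_1; ...; e_s] lists the edges e_m
   as pairs of endpoints (with repetitions).  x0 is only a default value for
   nth; all indices used are < size p, so it is irrelevant. *)
Definition even_connection_seq (x0 : T) (es : seq (T * T)) (p : seq T) (k : nat) :=
  [/\ (1 <= k)%N,
      size p = (2 * k).+2,
      (forall r, (r < (2 * k).+1)%N -> G (nth x0 p r) (nth x0 p r.+1)) &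
      (* each {p_(2l+1), p_(2l+2)} is some e_m, each edge used at most as
         many times as it appears among e_1, ..., e_s *)
      forall f : T * T,
        (count (ueq f) (used_edges x0 p k) <= count (ueq f) es)%N].

Definition even_connected (es : seq (T * T)) (u v : T) :=
  exists (p : seq T) (k : nat),
    [/\ even_connection_seq u es p k, nth u p 0 = u & nth u p (2 * k).+1 = v].

(* Edges of G' (polarization of (I(G)^(s+1) : e_1...e_s)) between vertices of
   G: for a != b, {a,b} in E(G') iff {a,b} in E(G) or a, b even-connected.
   For a = b we let G'_edge a a mean that the generator a^2 is present, i.e.
   {a, a*} is an edge of G' (iff a is even-connected to itself). *)
Definition G'_edge (es : seq (T * T)) (a b : T) : Prop :=
  if a == b then even_connected es a a else G a b \/ even_connected es a b.
End Graphs.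

From mathcomp Require Import all_boot zify.
Set Implicit Arguments. Unset Strict Implicit. Unset Printing Implicit Defensive.

(* Record an even-connection by its distinguished edges (p_(2l+1), p_(2l+2)),
   consecutive ones being joined by edges of G.  If {w, p_i} is an edge of G
   and p_i is inside the path, then w followed by the part of the path from
   the distinguished edge through p_i onwards to v (or, reversed, back to u)
   is an even-connection.  If instead w is even-connected to p_i by a path q,
   cut q at its first distinguished edge that p also uses (in either
   orientation) and continue along p from there: the two pieces use disjoint
   edges, so the multiplicities still fit inside e_1 ... e_s. *)

Definition pair_swap (T : Type) (e : T * T) := (e.2, e.1).

Section UnorderedPairs.
Variable T : finType.
Implicit Types (e f g : T * T) (A B C : seq (T * T)).

Lemma ueqP f g : reflect (g = f \/ g = pair_swap f) (ueq f g).
Proof.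
case: f g => [a b] [c d]; rewrite /ueq /pair_swap /=.
apply: (iffP idP).
- by case/orP => /andP [/eqP -> /eqP ->]; [left | right].
- by case=> [[-> ->] | [-> ->]]; rewrite !eqxx ?orbT.
Qed.

Lemma ueq_swapr f g : ueq f (pair_swap g) = ueq f g.
Proof. by case: f g => [a b] [c d]; rewrite /ueq /pair_swap /= orbC. Qed.

Lemma ueq_sym f g : ueq f g = ueq g f.
Proof.
apply/ueqP/ueqP; case: f g => [a b] [c d] [[-> ->] | [-> ->]]; by [left | right].
Qed.

Lemma ueq_trans f g h : ueq f g -> ueq g h -> ueq f h.
Proof.
move=> /ueqP [->|->] /ueqP [->|->]; apply/ueqP; case: f => a b; by [left | right].
Qed.

Definition rev_edges A := rev (map (@pair_swap T) A).

Lemma count_ueq_rev_edges f A : count (ueq f) (rev_edges A) = count (ueq f) A.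
Proof. by rewrite count_rev count_map; apply: eq_count => e; rewrite /= ueq_swapr. Qed.

Definition edge_submset A B := forall f, count (ueq f) A <= count (ueq f) B.

Definition edge_disjoint A B := forall e1 e2, e1 \in A -> e2 \in B -> ~~ ueq e1 e2.

Lemma edge_submset_prefix A B C : prefix A B -> edge_submset B C -> edge_submset A C.
Proof.
by move=> /prefixP [B' ->] sBC f; apply: leq_trans (sBC f); rewrite count_cat leq_addr.
Qed.

Lemma edge_submset_suffix A B C : edge_submset (A ++ B) C -> edge_submset B C.
Proof. by move=> sABC f; apply: leq_trans (sABC f); rewrite count_cat leq_addl. Qed.

Lemma edge_submset_rev A C : edge_submset A C -> edge_submset (rev_edges A) C.
Proof. by move=> sAC f; rewrite count_ueq_rev_edges. Qed.

(* A class of ueq meets at most one of two edge-disjoint lists. *)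
Lemma edge_submset_cat A B C :
  edge_disjoint A B -> edge_submset A C -> edge_submset B C -> edge_submset (A ++ B) C.
Proof.
move=> dAB sAC sBC f; rewrite count_cat.
have [/hasP [e1 Ae1 fe1] | /hasPn noA] := boolP (has (ueq f) A).
  suff -> : count (ueq f) B = 0 by rewrite addn0 sAC.
  apply/eqP; rewrite -leqn0 leqNgt -has_count; apply/hasP => -[e2 Be2 fe2].
  by have /negP[] := dAB _ _ Ae1 Be2; rewrite ueq_sym in fe1; apply: ueq_trans fe1 fe2.
suff -> : count (ueq f) A = 0 by rewrite sBC.
by apply/eqP; rewrite -leqn0 leqNgt -has_count; apply/hasP => -[e Ae]; apply/negP/noA.
Qed.

Lemma edge_disjoint_rev A B : edge_disjoint A B -> edge_disjoint A (rev_edges B).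
Proof.
move=> dAB e1 e2 Ae1; rewrite mem_rev => /mapP [e Be ->].
by rewrite ueq_swapr; apply: dAB.
Qed.

End UnorderedPairs.

Section AlternatingWalks.
Variable T : finType.
Variable G : rel T.
Hypothesis Gsym : symmetric G.

Fixpoint alt_walk (a : T) (ps : seq (T * T)) (c : T) : bool :=
  if ps is e :: ps' then [&& G a e.1, G e.1 e.2 & alt_walk e.2 ps' c] else G a c.

Lemma alt_walk_cat a ps1 e ps2 c :
  alt_walk a (ps1 ++ e :: ps2) c = [&& alt_walk a ps1 e.1, G e.1 e.2 & alt_walk e.2 ps2 c].
Proof. by elim: ps1 a => [|e' ps1 IH] a //=; rewrite IH !andbA. Qed.

Lemma alt_walk_rev a ps c : alt_walk a ps c -> alt_walk c (rev_edges ps) a.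
Proof.
elim: ps a => [|e ps IH] a /=; first by rewrite Gsym.
case/and3P => Gae Ge Gps.
rewrite /rev_edges map_cons rev_cons -cats1 alt_walk_cat /=.
by rewrite IH //= Gsym Ge Gsym.
Qed.

End AlternatingWalks.

Section EvenConnections.
Variable T : finType.
Variable G : rel T.
Variable es : seq (T * T).

Definition even_linked (a c : T) :=
  exists ps, [/\ ps != [::], alt_walk G a ps c & edge_submset ps es].

Lemma used_edges_cons2 (x0 a b : T) p k :
  used_edges x0 [:: a, b & p] k.+1 = (b, nth x0 p 0) :: used_edges x0 p k.
Proof.
rewrite /used_edges /= -[iota 1 k]/(iota (1 + 0) k) iotaDl -map_comp; congr (_ :: _).
by apply: eq_map => l; rewrite /comp (_ : 2 * (1 + l) = (2 * l).+2) //; lia.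
Qed.

Lemma alt_walk_used_edges x0 p k :
  size p = (2 * k).+2 ->
  (forall r, r < (2 * k).+1 -> G (nth x0 p r) (nth x0 p r.+1)) ->
  alt_walk G (nth x0 p 0) (used_edges x0 p k) (nth x0 p (2 * k).+1).
Proof.
elim: k p => [|k IH] [|a [|b p]] //.
  by case: p => // _ /(_ 0); apply.
have -> : 2 * k.+1 = (2 * k).+2 by lia.
move=> [size_p] adj_p; rewrite used_edges_cons2 /=.
rewrite (adj_p 0) // (adj_p 1) //; apply: IH => // r lt_r.
exact: (adj_p r.+2).
Qed.

Fixpoint walk_seq (a : T) (ps : seq (T * T)) (c : T) : seq T :=
  if ps is e :: ps' then a :: e.1 :: walk_seq e.2 ps' c else [:: a; c].

Lemma size_walk_seq a ps c : size (walk_seq a ps c) = (2 * size ps).+2.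
Proof. by elim: ps a => [|e ps IH] a //=; rewrite IH; lia. Qed.

Lemma nth_walk_seq_last x0 a ps c : nth x0 (walk_seq a ps c) (2 * size ps).+1 = c.
Proof.
elim: ps a => [|e ps IH] a //.
by rewrite (_ : 2 * size (e :: ps) = (2 * size ps).+2) //= mulnS.
Qed.

Lemma used_edges_walk_seq x0 a ps c : used_edges x0 (walk_seq a ps c) (size ps) = ps.
Proof.
elim: ps a => [|[e1 e2] ps IH] a //=.
by rewrite used_edges_cons2 IH; case: ps {IH}.
Qed.

Lemma walk_seq_adjacent x0 a ps c r :
  alt_walk G a ps c -> r < (2 * size ps).+1 ->
  G (nth x0 (walk_seq a ps c) r) (nth x0 (walk_seq a ps c) r.+1).
Proof.
elim: ps a r => [|[e1 e2] ps IH] a [|[|r]] //= /and3P [Gae Ge walk] lt_r //.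
- by case: ps {IH walk lt_r}.
- by apply: IH; rewrite // -ltnS; lia.
Qed.

Lemma even_connectedP a c : even_connected G es a c <-> even_linked a c.
Proof.
split.
- case=> p [k [[k_gt0 size_p adj_p count_p] p0 p_last]].
  exists (used_edges a p k); split => //.
  + by rewrite -size_eq0 size_map size_iota -lt0n.
  + by rewrite -{1}p0 -p_last; apply: alt_walk_used_edges.
- case=> ps [ps_nil walk count_ps].
  exists (walk_seq a ps c), (size ps); split; last exact: nth_walk_seq_last.
  + split; rewrite ?used_edges_walk_seq ?lt0n ?size_eq0 //.
    * exact: size_walk_seq.
    * by move=> r; apply: walk_seq_adjacent.
  + by case: ps {ps_nil walk count_ps}.
Qed.

Definition on_edges (z : T) (ps : seq (T * T)) := has (fun e => (z == e.1) || (z == e.2)) ps.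

Lemma nth_even_connection x0 p k i : i <= (2 * k).+1 ->
  [|| nth x0 p i == nth x0 p 0, nth x0 p i == nth x0 p (2 * k).+1
    | on_edges (nth x0 p i) (used_edges x0 p k)].
Proof.
move=> le_i; have [-> | i_gt0] := posnP i; first by rewrite eqxx.
have [i_lt | i_ge] := ltnP i (2 * k).+1; last first.
  by rewrite (_ : i = (2 * k).+1) ?eqxx ?orbT //; lia.
apply/orP; right; apply/orP; right; apply/hasP.
move: (odd_double_half i.-1); rewrite -muln2; set l := i.-1./2 => def_l.
have l_lt : l < k by case: (odd _) def_l => /= def_l; lia.
exists (nth x0 p (2 * l).+1, nth x0 p (2 * l).+2) => /=.
  by apply/mapP; exists l; rewrite // mem_iota.
have [-> | ->] : i = (2 * l).+1 \/ i = (2 * l).+2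
  by case: (odd _) def_l => /= def_l; lia.
all: by rewrite eqxx ?orbT.
Qed.

End EvenConnections.

Section Splicing.
Variable T : finType.
Variable G : rel T.
Hypothesis Gsym : symmetric G.
Variable es : seq (T * T).

Lemma even_linked_sym a c : even_linked G es a c -> even_linked G es c a.
Proof.
case=> ps [ps_nil walk sub]; exists (rev_edges ps); split.
- by rewrite -size_eq0 size_rev size_map size_eq0.
- exact: alt_walk_rev.
- exact: edge_submset_rev.
Qed.

Lemma splice_forward a A u ps v e :
  e \in ps -> alt_walk G a A e.1 -> alt_walk G u ps v ->
  edge_submset A es -> edge_submset ps es -> edge_disjoint A ps ->
  even_linked G es a v.
Proof.
case/splitPr=> ps1 ps2 walkA walk sA sps dA; exists (A ++ e :: ps2); split.
- by case: A {walkA sA dA}.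
- by move: walk; rewrite !alt_walk_cat walkA => /and3P [_ -> ->].
- apply: edge_submset_cat => //; last exact: edge_submset_suffix sps.
  by move=> e1 e2 Ae1 e2_ps2; apply: dA; rewrite // mem_cat e2_ps2 orbT.
Qed.

Lemma splice_backward a A u ps v e :
  e \in ps -> alt_walk G a A e.2 -> alt_walk G u ps v ->
  edge_submset A es -> edge_submset ps es -> edge_disjoint A ps ->
  even_linked G es a u.
Proof.
move=> e_ps walkA walk sA sps dA.
have e_rev : pair_swap e \in rev_edges ps by rewrite mem_rev map_f.
exact: (splice_forward e_rev walkA (alt_walk_rev Gsym walk) sA
          (edge_submset_rev sps) (edge_disjoint_rev dA)).
Qed.

Lemma splice a A u ps v z :
  on_edges z ps -> alt_walk G a A z -> alt_walk G u ps v ->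
  edge_submset A es -> edge_submset ps es -> edge_disjoint A ps ->
  even_linked G es a u \/ even_linked G es a v.
Proof.
case/hasP=> e e_ps /orP [] /eqP -> walkA walk sA sps dA.
- by right; apply: (splice_forward e_ps walkA walk).
- by left; apply: (splice_backward e_ps walkA walk).
Qed.

Lemma alt_walk_first_contact w qs z ps :
  alt_walk G w qs z ->
  exists A z', [/\ alt_walk G w A z', prefix A qs, edge_disjoint A ps
                 & A = qs /\ z' = z \/ on_edges z' ps].
Proof.
elim: qs w => [|e qs IH] w walk; first by exists [::], z; split; last left.
case/and3P: walk => Gwe Ge walk.
have [/hasP [r r_ps e_r] | /hasPn e_ps] := boolP (has (ueq e) ps).
  exists [::], e.1; split; rewrite ?prefix0s //; right; apply/hasP; exists r => //.
  by case/ueqP: e_r => ->; rewrite /= eqxx ?orbT.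
have [A [z' [walkA prefA dA end_z']]] := IH _ walk.
exists (e :: A), z'; split.
- by rewrite /= Gwe Ge.
- by rewrite prefix_cons eqxx.
- by move=> e1 e2; rewrite inE => /orP [/eqP -> | /dA]; [apply: e_ps | apply].
- by case: end_z' => [[-> ->] | ]; [left | right].
Qed.

Lemma G'_edge_adj a b : a != b -> G a b -> G'_edge G es a b.
Proof. by move=> a_b Gab; rewrite /G'_edge (negbTE a_b); left. Qed.

Lemma G'_edge_linked a b : even_linked G es a b -> G'_edge G es a b.
Proof. by move=> /even_connectedP; rewrite /G'_edge; case: eqP => [-> | _] //; right. Qed.

Lemma G'_edge_neqE a b : a != b -> G'_edge G es a b -> G a b \/ even_linked G es a b.
Proof. by move=> a_b; rewrite /G'_edge (negbTE a_b) => -[|/even_connectedP]; [left | right]. Qed.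

Lemma G'_edge_along u ps v w z :
  alt_walk G u ps v -> edge_submset ps es ->
  [|| z == u, z == v | on_edges z ps] -> w != z -> G'_edge G es w z ->
  G'_edge G es u w \/ G'_edge G es v w.
Proof.
move=> walk sps z_on w_z /(G'_edge_neqE w_z) edge_wz.
have linked_uv : even_linked G es w u \/ even_linked G es w v ->
    G'_edge G es u w \/ G'_edge G es v w.
  by case=> /even_linked_sym /G'_edge_linked; [left | right].
have nil_sub : edge_submset [::] es by [].
have nil_disjoint : edge_disjoint [::] ps by [].
case: edge_wz => [Gwz | [qs [qs_nil walkq sqs]]].
  case/or3P: z_on => [/eqP z_u | /eqP z_v | z_ps].
  - by left; apply: G'_edge_adj; rewrite -z_u 1?eq_sym // Gsym.
  - by right; apply: G'_edge_adj; rewrite -z_v 1?eq_sym // Gsym.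
  - by apply/linked_uv/(splice z_ps _ walk nil_sub sps nil_disjoint).
have [A [z' [walkA prefA dA [[A_qs _] | z'_ps]]]] := alt_walk_first_contact ps walkq.
  subst A; case/or3P: z_on => [/eqP z_u | /eqP z_v | z_ps]; apply: linked_uv.
  - by left; exists qs; rewrite -z_u.
  - by right; exists qs; rewrite -z_v.
  - exact: (splice z_ps walkq walk sqs sps dA).
exact/linked_uv/(splice z'_ps walkA walk (edge_submset_prefix prefA sqs) sps dA).
Qed.

End Splicing.

Theorem lemma4p3 (T : finType) (G : rel T) (h : nat)
  (x y : 'I_h -> T)
  (HG : simple_graph G)
  (Hvwc : very_well_covered G)
  (Hxinj : injective x) (Hyinj : injective y)
  (Hxy : forall i j, x i != y j)
  (HV : forall t : T, exists i, t = x i \/ t = y i)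
  (Hcover : minimal_vertex_cover G [set x i | i in 'I_h])
  (Hindep : maximal_independent G [set y i | i in 'I_h])
  (Hxyedge : forall i, G (x i) (y i))
  (s : nat) (Hs : (1 <= s)%N)
  (es : seq (T * T)) (Hsize : size es = s)
  (Hes : forall e, e \in es -> G e.1 e.2)
  (p : seq T) (k : nat) (u v : T)
  (Hp : even_connection_seq G u es p k)
  (Hu : nth u p 0 = u) (Hv : nth u p (2 * k).+1 = v)
  (w : T) (i : nat) (Hi : (i <= (2 * k).+1)%N)
  (Hwi : w != nth u p i)
  (Hedge : G'_edge G es w (nth u p i)) :
  G'_edge G es u w \/ G'_edge G es v w.
Proof.
have [Gsym _] := HG.
have [_ size_p adj_p sub_p] := Hp.
have walk : alt_walk G u (used_edges u p k) v.
  by rewrite -{1}Hu -Hv; apply: alt_walk_used_edges.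
have p_i_on := nth_even_connection u p Hi; rewrite Hu Hv in p_i_on.
exact: (G'_edge_along Gsym walk sub_p p_i_on Hwi Hedge).
Qed.
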